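(* Every element of ${\rm BrM}({\rm G}_2)$ can be written in one of the following forms: (i) $\delta^k u e_i v w$ with $i\in\{0,1\}$, $u\in D_i$, $v\in K_i$, $w\in D_i^{\rm op}$ and $k\in\mathbb{Z}$; or (ii) $\delta^k a$ with $a\in W({\rm G}_2)$ and $k\in\mathbb{Z}$. In particular, ${\rm Br}({\rm G}_2)$ is spanned over $\mathbb{Z}[\delta^{\pm1}]$ by $39$ elements.
   Context: Let $\delta$ be an indeterminate. ${\rm Br}({\rm G}_2)$ is the $\mathbb{Z}[\delta^{\pm1}]$-algebra generated by $r_0,r_1,e_0,e_1$ subject to the following relations: - $r_0^2=r_1^2=1$; - $r_ie_i=e_ir_i=e_i$ for $i=0,1$; - $e_0^2=\delta^3e_0$ and $e_1^2=\delta e_1$; - $r_0e_1e_0=r_1e_0$ and $e_0e_1r_0=e_0r_1$; - $e_1r_0e_1r_0e_1=e_1$ and $e_1r_0e_1r_0r_1=e_1r_0r_1r_0$; - $e_0r_1e_0=\delta^2e_0$; - $r_1r_0e_1r_0e_1=r_0r_1r_0e_1$; - $(r_1r_0)^6=1$. ${\rm BrM}({\rm G}_2)$ is the submonoid of the multiplicative monoid of ${\rm Br}({\rm G}_2)$ generated by $\delta,\delta^{-1},r_0,r_1,e_0,e_1$. Let $\Psi$ be a root system of type ${\rm G}_2$ with simple roots $\beta_0$ (short) and $\beta_1$ (long), and positive roots $\Psi^+$. $W({\rm G}_2)$ is generated by the reflections $s_0,s_1$ in $\beta_0,\beta_1$. It acts on $\Psi^+$ by $w\cdot\beta=$ the unique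 element of $\Psi^+\cap\{\pm w\beta\}$. The subgroup of units generated by $r_0,r_1$ is isomorphic to $W({\rm G}_2)$ via $r_i\mapsto s_i$, and elements of $W({\rm G}_2)$ are identified with their images. For $i\in\{0,1\}$: - $N_i$ is the stabilizer of $\beta_i$ in $W({\rm G}_2)$ under this action; - $D_i$ is a set of left coset representatives for $N_i$ in $W({\rm G}_2)$; - $K_0=\{1\}$, and $K_1$ is the subgroup generated by $r_0r_1r_0r_1r_0$; - $D_i^{\rm op}=\{d^{\rm op}\mid d\in D_i\}$, where ${\rm op}$ is the anti-involution of ${\rm Br}({\rm G}_2)$ fixing $\delta,r_0,r_1,e_0,e_1$ (so $d^{\rm op}=d^{-1}$ for $d\in W({\rm G}_2)$). *)

From HB Require Import structures.
From mathcomp Require Import all_boot all_order all_algebra.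
Set Implicit Arguments. Unset Strict Implicit. Unset Printing Implicit Defensive.
Import Order.TTheory GRing.Theory Num.Theory.
Local Open Scope ring_scope.

(* A vector a*beta_0 + b*beta_1 of the root lattice is the pair (a, b).
   beta_0 is short, beta_1 is long; Cartan integers
   <beta_1, beta_0^v> = -3, <beta_0, beta_1^v> = -1. *)
Definition rvec := (int * int)%type.

(* index convention: false <-> 0, true <-> 1 *)
Definition beta (i : bool) : rvec := if i then (0, 1) else (1, 0).

Definition sref (i : bool) (v : rvec) : rvec :=
  if i then (v.1, v.1 - v.2)          (* s_1 (v) = v - <v, beta_1^v> beta_1 *)
  else (- v.1 + 3 * v.2, v.2).        (* s_0 (v) = v - <v, beta_0^v> beta_0 *)

(* A word w = [:: i1; ...; in] represents s_{i1} ... s_{in} in W(G2). *)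
Definition word := seq bool.

Definition wact (w : word) (v : rvec) : rvec := foldr sref v w.

(* equality in W(G2) (the reflection representation is faithful) *)
Definition weq (w w' : word) : Prop :=
  wact w (beta false) = wact w' (beta false) /\
  wact w (beta true) = wact w' (beta true).

Definition wopp (v : rvec) : rvec := (- v.1, - v.2).

(* N_i : stabilizer of beta_i for the action w . beta = (Psi^+ \cap {+-w beta}) *)
Definition inN (i : bool) (w : word) : Prop :=
  wact w (beta i) = beta i \/ wact w (beta i) = wopp (beta i).

(* D is a set of left coset representatives of N_i in W(G2):
   every left coset x N_i contains an element of D, and distinct elements of
   D lie in distinct cosets.  (The inverse of a word is its reverse.) *)
Definition left_coset_reps (i : bool) (D : seq word) : Prop :=
  (forall x : word, exists2 u, u \in D & inN i (rev u ++ x)) /\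
  (forall u u', u \in D -> u' \in D -> inN i (rev u ++ u') -> weq u u').

Definition kgen : word := [:: false; true; false; true; false].
Definition inK (i : bool) (v : word) : Prop :=
  if i then exists n : nat, weq v (flatten (nseq n kgen)) else weq v [::].

Section Ring.
Variable R : unitRingType.

Definition wimg (r0 r1 : R) (w : word) : R :=
  \prod_(b <- w) (if b then r1 else r0).

Inductive inBrM (d r0 r1 e0 e1 : R) : R -> Prop :=
  | BrM1 : inBrM d r0 r1 e0 e1 1
  | BrMd : inBrM d r0 r1 e0 e1 d
  | BrMdi : inBrM d r0 r1 e0 e1 d^-1
  | BrMr0 : inBrM d r0 r1 e0 e1 r0
  | BrMr1 : inBrM d r0 r1 e0 e1 r1
  | BrMe0 : inBrM d r0 r1 e0 e1 e0
  | BrMe1 : inBrM d r0 r1 e0 e1 e1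
  | BrMmul x y : inBrM d r0 r1 e0 e1 x -> inBrM d r0 r1 e0 e1 y ->
                 inBrM d r0 r1 e0 e1 (x * y).

Inductive inBr (d r0 r1 e0 e1 : R) : R -> Prop :=
  | Br1 : inBr d r0 r1 e0 e1 1
  | Brd : inBr d r0 r1 e0 e1 d
  | Brdi : inBr d r0 r1 e0 e1 d^-1
  | Brr0 : inBr d r0 r1 e0 e1 r0
  | Brr1 : inBr d r0 r1 e0 e1 r1
  | Bre0 : inBr d r0 r1 e0 e1 e0
  | Bre1 : inBr d r0 r1 e0 e1 e1
  | Bropp x : inBr d r0 r1 e0 e1 x -> inBr d r0 r1 e0 e1 (- x)
  | Bradd x y : inBr d r0 r1 e0 e1 x -> inBr d r0 r1 e0 e1 y ->
                inBr d r0 r1 e0 e1 (x + y)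
  | Brmul x y : inBr d r0 r1 e0 e1 x -> inBr d r0 r1 e0 e1 y ->
                inBr d r0 r1 e0 e1 (x * y).

Inductive lspan (d : R) (s : seq R) : R -> Prop :=
  | lspan0 : lspan d s 0
  | lspanS y (n k : int) v : lspan d s y -> v \in s ->
                             lspan d s (y + n%:~R * d ^ k * v).

Definition BrG2_rels (d r0 r1 e0 e1 : R) : Prop :=
  (d \is a GRing.unit /\
   [/\ d * r0 = r0 * d, d * r1 = r1 * d, d * e0 = e0 * d & d * e1 = e1 * d]) /\
  (r0 * r0 = 1 /\ r1 * r1 = 1) /\
  [/\ r0 * e0 = e0, e0 * r0 = e0, r1 * e1 = e1 & e1 * r1 = e1] /\
  (e0 * e0 = d ^+ 3 * e0 /\ e1 * e1 = d * e1) /\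
  [/\ r0 * e1 * e0 = r1 * e0 & e0 * e1 * r0 = e0 * r1] /\
  [/\ e1 * r0 * e1 * r0 * e1 = e1 & e1 * r0 * e1 * r0 * r1 = e1 * r0 * r1 * r0] /\
  e0 * r1 * e0 = d ^+ 2 * e0 /\
  r1 * r0 * e1 * r0 * e1 = r0 * r1 * r0 * e1 /\
  (r1 * r0) ^+ 6 = 1.

End Ring.

(* Oriented left to right, the defining relations together with fourteen derived
   ones (each certified by an explicit derivation) form a rewriting system on words
   in r0, r1, e0, e1, delta.  A finite computation shows that the products of any
   two of 39 normal words normalize to a power of delta times one of them, so every
   monomial is delta^k times a normal word, and these 39 words span Br(G2).  Each
   normal word is a Weyl group element or has the shape x e_i y; since the
   stabilizer N_i satisfies n e_i = e_i k and e_i n = e_i k with k in K_i (again a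
   finite check on the 12 elements of W(G2)), writing x = u n with u in D_i and
   k y = n' w with w^-1 in D_i brings x e_i y to the form u e_i v w. *)
From HB Require Import structures.
From mathcomp Require Import all_boot all_order all_algebra.
Set Implicit Arguments. Unset Strict Implicit. Unset Printing Implicit Defensive.
Import GRing.Theory.

Definition rule := (seq nat * seq nat)%type.

(* [(i, p, b)]: apply rule [i] at position [p], from left to right iff [b]. *)
Definition step := (nat * nat * bool)%type.

Definition match_at (l w : seq nat) (p : nat) := take (size l) (drop p w) == l.

Definition splice (p : nat) (l r w : seq nat) := take p w ++ r ++ drop (p + size l) w.

Definition apply_step (rs : seq rule) (w : seq nat) (st : step) : option (seq nat) :=
  let: (i, p, ltr) := st in
  let: (l, r) := nth ([::], [::]) rs i in
  let: (a, b) := if ltr then (l, r) else (r, l) in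
  if match_at a w p then Some (splice p a b w) else None.

Fixpoint run (rs : seq rule) (w : seq nat) (sts : seq step) : option (seq nat) :=
  if sts is st :: sts' then obind (fun w' => run rs w' sts') (apply_step rs w st)
  else Some w.

Fixpoint certified (rs : seq rule) (cs : seq (rule * seq step)) : bool :=
  if cs is (rl, sts) :: cs' then
    (run rs rl.1 sts == Some rl.2) && certified (rcons rs rl) cs'
  else true.

Definition occurrences (l w : seq nat) :=
  [seq p <- iota 0 (size w).+1 | match_at l w p].

Fixpoint rewrite1 (rs : seq rule) (w : seq nat) : option (seq nat) :=
  if rs is (l, r) :: rs' then
    if occurrences l w is p :: _
    then Some (splice p l r w) else rewrite1 rs' w
  else None.

Fixpoint normalize (n : nat) (rs : seq rule) (w : seq nat) : seq nat :=
  if n is n'.+1 then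
    if rewrite1 rs w is Some w' then normalize n' rs w' else w
  else w.

Section WordEvaluation.
Variables (R : pzSemiRingType) (f : nat -> R).
Local Open Scope ring_scope.

Definition eval_word (w : seq nat) : R := \prod_(a <- w) f a.

Definition rule_holds (rl : rule) := eval_word rl.1 = eval_word rl.2.
Definition rules_hold (rs : seq rule) := {in rs, forall rl, rule_holds rl}.

Lemma eval_word_cat u v : eval_word (u ++ v) = eval_word u * eval_word v.
Proof. exact: big_cat. Qed.

Lemma rules_hold_foldr rs :
  foldr (fun rl P => rule_holds rl /\ P) True rs -> rules_hold rs.
Proof.
elim: rs => [|rl rs IH] [] // Hrl /IH Hrs x.
by rewrite inE => /predU1P [-> | /Hrs].
Qed.

Lemma rules_hold_nth i rs : rules_hold rs -> rule_holds (nth ([::], [::]) rs i).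
Proof.
move=> Hrs; have [Hi | Hi] := ltnP i (size rs); first exact/Hrs/mem_nth.
by rewrite nth_default.
Qed.

Lemma eval_word_splice p l r w :
  eval_word l = eval_word r -> match_at l w p -> eval_word (splice p l r w) = eval_word w.
Proof.
move=> Hlr /eqP Hw.
rewrite -[in RHS](cat_take_drop p w) -[drop p w](cat_take_drop (size l)) Hw.
by rewrite drop_drop addnC !eval_word_cat Hlr.
Qed.

Lemma eval_word_apply_step rs w st w' :
  rules_hold rs -> apply_step rs w st = Some w' -> eval_word w' = eval_word w.
Proof.
case: st => [[i p] ltr] /(rules_hold_nth i) /=.
case: (nth _ rs i) => l r Hlr.
by case: ltr; case: ifP => // Hm [<-]; apply: eval_word_splice.
Qed.

Lemma eval_word_run rs w sts w' :
  rules_hold rs -> run rs w sts = Some w' -> eval_word w' = eval_word w.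
Proof.
move=> Hrs; elim: sts w => [|st sts IH] w /=; first by case=> ->.
case Hst: (apply_step rs w st) => [w1|] //= /IH ->.
exact: eval_word_apply_step Hst.
Qed.

Lemma certified_rules_hold rs cs :
  rules_hold rs -> certified rs cs -> rules_hold (rs ++ map fst cs).
Proof.
elim: cs rs => [|[rl sts] cs IH] rs Hrs /=; first by rewrite cats0.
case/andP => /eqP Hrun Hcs; rewrite -cat_rcons; apply: (IH _ _ Hcs) => x.
rewrite mem_rcons.
case/predU1P => [-> | /Hrs //]; symmetry; exact: eval_word_run Hrs Hrun.
Qed.

Lemma eval_word_rewrite1 rs w w' :
  rules_hold rs -> rewrite1 rs w = Some w' -> eval_word w' = eval_word w.
Proof.
elim: rs => [|[l r] rs IH] //= Hrs.
case Hps: (occurrences l w) => [|p ps].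
  by apply: IH => x Hx; apply: Hrs; rewrite inE Hx orbT.
have : p \in occurrences l w by rewrite Hps inE eqxx.
rewrite mem_filter => /andP [Hm _] [<-].
by apply: eval_word_splice Hm; apply: (Hrs (l, r)); rewrite inE eqxx.
Qed.

Lemma eval_word_normalize n rs w :
  rules_hold rs -> eval_word (normalize n rs w) = eval_word w.
Proof.
move=> Hrs; elim: n w => [|n IH] w //=.
case Hw: (rewrite1 rs w) => [w1|] //; rewrite IH; exact: eval_word_rewrite1 Hrs Hw.
Qed.

End WordEvaluation.

(* Letters [0], [1], [2], [3], [4] stand for [r0], [r1], [e0], [e1], [delta]. *)
Definition br_base_rules : seq rule := [::
  ([:: 0; 4], [:: 4; 0]); ([:: 1; 4], [:: 4; 1]);
  ([:: 2; 4], [:: 4; 2]); ([:: 3; 4], [:: 4; 3]);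
  ([:: 0; 0], [::]); ([:: 1; 1], [::]);
  ([:: 0; 2], [:: 2]); ([:: 2; 0], [:: 2]);
  ([:: 1; 3], [:: 3]); ([:: 3; 1], [:: 3]);
  ([:: 2; 2], [:: 4; 4; 4; 2]); ([:: 3; 3], [:: 4; 3]);
  ([:: 0; 3; 2], [:: 1; 2]); ([:: 2; 3; 0], [:: 2; 1]);
  ([:: 3; 0; 3; 0; 3], [:: 3]); ([:: 3; 0; 3; 0; 1], [:: 3; 0; 1; 0]);
  ([:: 2; 1; 2], [:: 4; 4; 2]);
  ([:: 1; 0; 3; 0; 3], [:: 0; 1; 0; 3]);
  ([:: 1; 0; 1; 0; 1; 0; 1; 0; 1; 0; 1; 0], [::])].

(* Each derived rule comes with a derivation from the rules listed before it;
   rule indices refer to [br_base_rules] extended by the derived rules. *)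
Definition br_derived_rules : seq (rule * seq step) := [::
  (([:: 0; 1; 2], [:: 3; 2]), [:: (12, 1, false); (4, 0, true)]);
  (([:: 2; 3; 2], [:: 4; 4; 2]), [:: (7, 0, false); (12, 1, true); (16, 0, true)]);
  (([:: 2; 1; 0], [:: 2; 3]), [:: (13, 0, false); (4, 2, true)]);
  (([:: 1; 0; 1; 0; 3], [:: 0; 3; 0; 3]), [:: (17, 1, false); (5, 0, true)]);
  (([:: 3; 0; 1; 0; 3], [:: 3]), [:: (17, 1, false); (9, 0, true); (14, 0, true)]);
  (([:: 3; 0; 1; 0; 1], [:: 3; 0; 3; 0]), [:: (15, 0, false); (5, 4, true)]);
  (([:: 0; 1; 0; 3; 0; 1; 0], [:: 1; 0; 3; 0; 1]),
     [:: (15, 3, false); (17, 0, false); (15, 4, true); (15, 2, true); (4, 5, true)]);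
  (([:: 1; 0; 3; 0; 1; 0], [:: 0; 1; 0; 3; 0; 1]), [:: (15, 2, false); (17, 0, true)]);
  (([:: 0; 1; 0; 1; 0; 1; 0; 1; 0; 1; 0], [:: 1]), [:: (5, 0, false); (18, 1, true)]);
  (([:: 1; 0; 1; 0; 1; 0; 1; 0; 1; 0], [:: 0; 1]), [:: (4, 0, false); (27, 1, true)]);
  (([:: 0; 1; 0; 1; 0; 1; 0; 1; 0], [:: 1; 0; 1]), [:: (5, 0, false); (28, 1, true)]);
  (([:: 1; 0; 1; 0; 1; 0; 1; 0], [:: 0; 1; 0; 1]), [:: (4, 0, false); (29, 1, true)]);
  (([:: 0; 1; 0; 1; 0; 1; 0], [:: 1; 0; 1; 0; 1]), [:: (5, 0, false); (30, 1, true)]);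
  (([:: 1; 0; 1; 0; 1; 0], [:: 0; 1; 0; 1; 0; 1]), [:: (4, 0, false); (31, 1, true)])].

Definition br_rules := br_base_rules ++ map fst br_derived_rules.

(* The step bound only limits how far words get rewritten, never soundness. *)
Definition br_nf (w : seq nat) := normalize 200 br_rules w.

Definition weyl_words : seq word := [::
  [::]; [:: false]; [:: true]; [:: false; true]; [:: true; false];
  [:: false; true; false]; [:: true; false; true];
  [:: false; true; false; true]; [:: true; false; true; false];
  [:: false; true; false; true; false]; [:: true; false; true; false; true];
  [:: false; true; false; true; false; true]].

Definition letter_of (b : bool) : nat := if b then 1%N else 0%N.

Definition e_letter (i : bool) : nat := if i then 3%N else 2%N.

Definition br_basis : seq (seq nat) :=
  map (map letter_of) weyl_words ++ [::
  [:: 2]; [:: 3]; [:: 0; 3]; [:: 1; 2]; [:: 2; 1]; [:: 2; 3]; [:: 3; 0]; [:: 3; 2];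
  [:: 0; 3; 0]; [:: 1; 0; 3]; [:: 1; 2; 1]; [:: 1; 2; 3]; [:: 3; 0; 1];
  [:: 3; 0; 3]; [:: 3; 2; 1]; [:: 3; 2; 3];
  [:: 0; 1; 0; 3]; [:: 0; 3; 0; 1]; [:: 0; 3; 0; 3];
  [:: 1; 0; 3; 0]; [:: 3; 0; 1; 0]; [:: 3; 0; 3; 0];
  [:: 0; 1; 0; 3; 0]; [:: 0; 3; 0; 1; 0]; [:: 0; 3; 0; 3; 0];
  [:: 1; 0; 3; 0; 1]; [:: 0; 1; 0; 3; 0; 1]].

(* Every rule moves [delta] to the left, so a normal form is a power of
   [delta] followed by a [delta]-free word. *)
Definition basis_mul_closed :=
  allrel (fun c c' =>
    let w := br_nf (c ++ c') in let k := find (fun a => a != 4%N) w in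
    (w == nseq k 4%N ++ drop k w) && (drop k w \in br_basis)) br_basis br_basis.

(* [(c, (x, i, y))]: the word [c] equals [x e_i y] with [x], [y] reflection words. *)
Definition basis_factorizations : seq (seq nat * (word * bool * word)) := [::
  ([:: 2], ([::], false, [::]));
  ([:: 3], ([::], true, [::]));
  ([:: 0; 3], ([:: false], true, [::]));
  ([:: 1; 2], ([:: true], false, [::]));
  ([:: 2; 1], ([::], false, [:: true]));
  ([:: 2; 3], ([::], false, [:: true; false]));
  ([:: 3; 0], ([::], true, [:: false]));
  ([:: 3; 2], ([:: false; true], false, [::]));
  ([:: 0; 3; 0], ([:: false], true, [:: false]));
  ([:: 1; 0; 3], ([:: true; false], true, [::]));
  ([:: 1; 2; 1], ([:: true], false, [:: true]));
  ([:: 1; 2; 3], ([:: true], false, [:: true; false]));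
  ([:: 3; 0; 1], ([::], true, [:: false; true]));
  ([:: 3; 0; 3], ([::], true, [:: false; true; false; true; false]));
  ([:: 3; 2; 1], ([:: false; true], false, [:: true]));
  ([:: 3; 2; 3], ([:: false; true], false, [:: true; false]));
  ([:: 0; 1; 0; 3], ([:: true; false], true, [:: false; true; false; true; false]));
  ([:: 0; 3; 0; 1], ([:: false], true, [:: false; true]));
  ([:: 0; 3; 0; 3], ([:: false], true, [:: false; true; false; true; false]));
  ([:: 1; 0; 3; 0], ([:: true; false], true, [:: false]));
  ([:: 3; 0; 1; 0], ([::], true, [:: false; true; false]));
  ([:: 3; 0; 3; 0], ([::], true, [:: false; true; false; true]));
  ([:: 0; 1; 0; 3; 0], ([:: true; false], true, [:: false; true; false; true]));
  ([:: 0; 3; 0; 1; 0], ([:: false], true, [:: false; true; false]));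
  ([:: 0; 3; 0; 3; 0], ([:: false], true, [:: false; true; false; true]));
  ([:: 1; 0; 3; 0; 1], ([:: true; false], true, [:: false; true]));
  ([:: 0; 1; 0; 3; 0; 1], ([:: true; false], true, [:: false; true; false]))].

Definition basis_factorized :=
  all (fun c => (c \in map (map letter_of) weyl_words) ||
    has (fun p => let: (c', (x, i, y)) := p in
      (c' == c) && (br_nf c == br_nf (map letter_of x ++ e_letter i :: map letter_of y)))
      basis_factorizations) br_basis.

Definition weyl_lmul (b : bool) (c : word) : word :=
  map (eq_op 1%N) (br_nf (map letter_of (b :: c))).

Definition weyl_lmul_ok :=
  allrel (fun b c => let c' := weyl_lmul b c in
    [&& map letter_of c' == br_nf (map letter_of (b :: c)), c' \in weyl_words,
        wact (b :: c) (beta false) == wact c' (beta false)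
      & wact (b :: c) (beta true) == wact c' (beta true)])
    [:: false; true] weyl_words.

Fixpoint weyl_reduce (a : word) : word :=
  if a is b :: a' then weyl_lmul b (weyl_reduce a') else [::].

Definition inNb (i : bool) (c : word) :=
  (wact c (beta i) == beta i) || (wact c (beta i) == wopp (beta i)).

Definition K_reps (i : bool) : seq word := if i then [:: [::]; kgen] else [:: [::]].

Definition stabilizer_absorbed :=
  allrel (fun i c => inNb i c ==> has (fun k =>
      (br_nf (map letter_of c ++ [:: e_letter i]) == br_nf (e_letter i :: map letter_of k))
   && (br_nf (e_letter i :: map letter_of c) == br_nf (e_letter i :: map letter_of k)))
    (K_reps i)) [:: false; true] weyl_words.

Lemma br_derived_rules_certified : certified br_base_rules br_derived_rules.
Proof. by vm_compute. Qed.
Lemma basis_mul_closedT : basis_mul_closed.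
Proof. by vm_compute. Qed.
Lemma basis_factorizedT : basis_factorized.
Proof. by vm_compute. Qed.
Lemma weyl_lmul_okT : weyl_lmul_ok.
Proof. by vm_compute. Qed.
Lemma stabilizer_absorbedT : stabilizer_absorbed.
Proof. by vm_compute. Qed.

Local Open Scope ring_scope.

Lemma sref_involutive b : involutive (sref b).
Proof.
case: b => -[x y]; rewrite /sref /=; congr pair.
- by rewrite opprB addrC subrK.
- by rewrite opprD opprK addrNK.
Qed.

Lemma sref_opp b v : sref b (wopp v) = wopp (sref b v).
Proof.
case: b; case: v => x y; rewrite /sref /wopp /=; congr pair.
all: by rewrite ?opprB ?opprD ?mulrN // opprK addrC.
Qed.

Lemma wact_opp a v : wact a (wopp v) = wopp (wact a v).
Proof. by elim: a => [|b a IH] //=; rewrite IH sref_opp. Qed.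

Lemma wact_revK a v : wact (rev a) (wact a v) = v.
Proof.
elim: a v => [|b a IH] v //=.
by rewrite rev_cons /wact foldr_rcons -/(wact _ _) sref_involutive IH.
Qed.

Lemma inN_rev i a : inN i a -> inN i (rev a).
Proof.
have woppK : involutive wopp by case=> x y; rewrite /wopp /= !opprK.
rewrite /inN; case=> Ha; [left | right]; have := wact_revK a (beta i); rewrite Ha //.
by rewrite wact_opp => /(congr1 wopp); rewrite woppK.
Qed.

Lemma inNP i c : reflect (inN i c) (inNb i c).
Proof. by apply: (iffP orP); case=> /eqP H; [left | right | left | right]. Qed.

Lemma weyl_lmulP b c : c \in weyl_words ->
  [/\ weyl_lmul b c \in weyl_words,
      map letter_of (weyl_lmul b c) = br_nf (map letter_of (b :: c))
    & forall j, wact (weyl_lmul b c) (beta j) = wact (b :: c) (beta j)].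
Proof.
move=> Hc; have Hb : b \in [:: false; true] by case: b.
have /allrelP/(_ b c Hb Hc)/and4P [/eqP Hl Hin /eqP H0 /eqP H1] := weyl_lmul_okT.
by split=> // -[].
Qed.

Lemma weyl_reduce_in a : weyl_reduce a \in weyl_words.
Proof. by elim: a => [|b a IH] //=; case: (weyl_lmulP b IH). Qed.

Lemma wact_weyl_reduce a j : wact (weyl_reduce a) (beta j) = wact a (beta j).
Proof.
elim: a => [|b a IH] //=; case: (weyl_lmulP b (weyl_reduce_in a)) => _ _ ->.
by rewrite /= IH.
Qed.

Lemma inNb_weyl_reduce i a : inN i a -> inNb i (weyl_reduce a).
Proof. by move=> Ha; apply/inNP; rewrite /inN wact_weyl_reduce. Qed.

Lemma K_reps_inK i k : k \in K_reps i -> inK i k.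
Proof.
case: i; rewrite !inE; last by move/eqP ->.
by case/orP => /eqP ->; [exists 0%N | exists 1%N].
Qed.

Section LinearSpan.
Variables (R : unitRingType) (d : R) (s : seq R).

Lemma lspanD x y : lspan d s x -> lspan d s y -> lspan d s (x + y).
Proof.
move=> Hx; elim=> [|y0 n k v _ IH Hv]; first by rewrite addr0.
by rewrite addrA; apply: lspanS.
Qed.

Lemma lspanN x : lspan d s x -> lspan d s (- x).
Proof.
elim=> [|y n k v _ IH Hv]; first by rewrite oppr0; constructor.
by rewrite opprD -!mulNr -intrN; apply: lspanS.
Qed.

Lemma lspan_term n k v : v \in s -> lspan d s (n%:~R * d ^ k * v).
Proof. by move=> Hv; rewrite -[_ * v]add0r; apply: lspanS => //; constructor. Qed.

Hypotheses (d_unit : d \is a GRing.unit) (comm_s_d : {in s, forall v, GRing.comm v d}).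
Hypothesis s_mul : {in s &, forall v v', exists k v'', v'' \in s /\ v * v' = d ^ k * v''}.

Lemma lspan_termM n k v m j v' : v \in s -> v' \in s ->
  lspan d s (n%:~R * d ^ k * v * (m%:~R * d ^ j * v')).
Proof.
move=> Hv Hv'; have [q [v'' [Hv'' Hvv']]] := s_mul Hv Hv'.
have comm_v : v * d ^ j = d ^ j * v := commrXz j (comm_s_d Hv).
have -> : n%:~R * d ^ k * v * (m%:~R * d ^ j * v') = (m * n)%:~R * d ^ (k + j + q) * v''.
  rewrite !mulrzl !mulrzAl !mulrzAr mulrzA; congr (_ *~ _ *~ _).
  rewrite !exprzDr // -(mulrA _ (d ^ q)) -Hvv' mulrA -(mulrA (d ^ k)).
  by rewrite -(mulrA _ v) comm_v !mulrA.
exact: lspan_term.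
Qed.

Lemma lspanM x y : lspan d s x -> lspan d s y -> lspan d s (x * y).
Proof.
elim=> [|x0 n k v _ IHx Hv] Hy; first by rewrite mul0r; constructor.
rewrite mulrDl; apply: lspanD; first exact: IHx.
elim: Hy => [|y0 m j v' _ IHy Hv']; first by rewrite mulr0; constructor.
by rewrite mulrDr; apply: lspanD => //; apply: lspan_termM.
Qed.

End LinearSpan.

Section BrauerG2.
Variables (R : unitRingType) (d r0 r1 e0 e1 : R).
Hypothesis rels : BrG2_rels d r0 r1 e0 e1.

Definition br_letter (a : nat) : R :=
  match a with 0 => r0 | 1 => r1 | 2 => e0 | 3 => e1 | _ => d end.

Local Notation ev := (@eval_word _ br_letter).

Lemma br_base_rules_hold : @rules_hold _ br_letter br_base_rules.
Proof.
case: rels => [[_ [Hd0 Hd1 Hd2 Hd3]] [[H00 H11] [[Ha Hb Hc Hd]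
  [[He0 He1] [[Hf Hg] [[Hh Hi] [Hj [Hk Hl]]]]]]]].
move: He0 Hj Hl; rewrite !exprS expr0 !mulr1 !mulrA => He0 Hj Hl.
apply: rules_hold_foldr; rewrite /= /rule_holds /eval_word.
rewrite !big_cons ?big_nil ?mulr1 ?mulrA /=.
by repeat split => //; apply/esym.
Qed.

Definition egen (i : bool) := if i then e1 else e0.

Local Notation wimg := (wimg r0 r1).

Lemma wimg_cons b w : wimg (b :: w) = (if b then r1 else r0) * wimg w.
Proof. exact: big_cons. Qed.

Lemma wimg_cat u v : wimg (u ++ v) = wimg u * wimg v.
Proof. exact: big_cat. Qed.

Lemma wimg_eval w : wimg w = ev (map letter_of w).
Proof. by rewrite /wimg /eval_word big_map; apply: eq_bigr => -[]. Qed.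

Lemma eval_e_letter i : ev [:: e_letter i] = egen i.
Proof. by case: i; rewrite /eval_word big_seq1. Qed.

Lemma br_rules_hold : @rules_hold _ br_letter br_rules.
Proof. exact: certified_rules_hold br_base_rules_hold br_derived_rules_certified. Qed.

Lemma eval_br_nf w : ev (br_nf w) = ev w.
Proof. exact: eval_word_normalize br_rules_hold. Qed.

Lemma eval_br_nf_eq u v : br_nf u = br_nf v -> ev u = ev v.
Proof. by move=> Huv; rewrite -eval_br_nf Huv eval_br_nf. Qed.

Lemma wimg_weyl_reduce a : wimg (weyl_reduce a) = wimg a.
Proof.
elim: a => [|b a IH] //=; case: (weyl_lmulP b (weyl_reduce_in a)) => _ Hl _.
by rewrite wimg_eval Hl eval_br_nf -wimg_eval !wimg_cons IH.
Qed.

Lemma wimg_revK u : wimg u * wimg (rev u) = 1.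
Proof.
case: rels => _ [[H00 H11] _].
elim: u => [|b u IH]; first by rewrite /wimg big_nil mulr1.
rewrite rev_cons -cats1 wimg_cat wimg_cons /wimg big_seq1 -/wimg.
by rewrite mulrA -(mulrA _ (wimg u)) IH mulr1; case: b.
Qed.

Lemma wimg_rev_cat u v : wimg u * wimg (rev u ++ v) = wimg v.
Proof. by rewrite wimg_cat mulrA wimg_revK mul1r. Qed.

Lemma egen_absorbs_stabilizer i n : inN i n ->
  exists2 k, k \in K_reps i &
    wimg n * egen i = egen i * wimg k /\ egen i * wimg n = egen i * wimg k.
Proof.
move=> /inNb_weyl_reduce Hn; have Hi : i \in [:: false; true] by case: (i).
have /allrelP/(_ i _ Hi (weyl_reduce_in n)) := stabilizer_absorbedT.
rewrite Hn => /hasP [k Hk /andP [/eqP /eval_br_nf_eq Hl /eqP /eval_br_nf_eq Hr]].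
exists k => //; rewrite -wimg_weyl_reduce -eval_e_letter !wimg_eval -!eval_word_cat.
by rewrite Hl -Hr.
Qed.

Lemma wimg_cat_rev u v : wimg (u ++ v) * wimg (rev v) = wimg u.
Proof. by rewrite wimg_cat -mulrA wimg_revK mulr1. Qed.

Lemma coset_normal_form i Di : left_coset_reps i Di -> forall x y,
  exists u v w, [/\ u \in Di, inK i v, rev w \in Di &
    wimg x * egen i * wimg y = wimg u * egen i * wimg v * wimg w].
Proof.
case=> Hcov _ x y.
have [u Hu /egen_absorbs_stabilizer [k Hk [Hl _]]] := Hcov x.
have [w Hw /inN_rev] := Hcov (rev (k ++ y)).
rewrite (rev_cat (rev w)) !revK => /egen_absorbs_stabilizer [k' Hk' [_ Hr]].
exists u, k', (rev w); split; [done | exact: K_reps_inK | by rewrite revK |].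
rewrite -(wimg_rev_cat u x) -(mulrA (wimg u)) Hl !mulrA -(mulrA _ (wimg k)) -wimg_cat.
by rewrite -(wimg_cat_rev (k ++ y) w) mulrA -(mulrA _ (egen i)) Hr !mulrA.
Qed.

Lemma d_unit : d \is a GRing.unit.
Proof. by case: rels => [[]]. Qed.

Lemma comm_d_eval c : GRing.comm d (ev c).
Proof.
case: rels => [[_ [Hd0 Hd1 Hd2 Hd3]] _].
elim: c => [|a c IH]; rewrite /eval_word ?big_nil ?big_cons; first exact: commr1.
by apply: commrM => //; case: a => [|[|[|[|a]]]] //=; apply: commrr.
Qed.

Lemma eval_nseq_delta n : ev (nseq n 4%N) = d ^+ n.
Proof. by rewrite /eval_word big_nseq; elim: n => //= n ->; rewrite exprS. Qed.

Lemma eval_basis_mul c c' : c \in br_basis -> c' \in br_basis ->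
  exists n c'', c'' \in br_basis /\ ev c * ev c' = d ^+ n * ev c''.
Proof.
move=> Hc Hc'; have /allrelP/(_ c c' Hc Hc') := basis_mul_closedT.
rewrite /=; set w := br_nf _; set k := find _ w => /andP [/eqP Hw Hdrop].
exists k, (drop k w); split => //.
by rewrite -eval_word_cat -eval_br_nf -/w {1}Hw eval_word_cat eval_nseq_delta.
Qed.

Lemma BrM_normal_form x : inBrM d r0 r1 e0 e1 x ->
  exists k c, c \in br_basis /\ x = d ^ k * ev c.
Proof.
have ev1 a : ev [:: a] = br_letter a by rewrite /eval_word big_seq1.
have ev0 : ev [::] = 1 by rewrite /eval_word big_nil.
elim=> [| | | | | | | y z _ [k [c [Hc ->]]] _ [m [c' [Hc' ->]]]].
- by exists 0, [::]; rewrite expr0z ev0 mulr1.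
- by exists 1, [::]; rewrite expr1z ev0 mulr1.
- by exists (-1), [::]; rewrite exprN1 ev0 mulr1.
- by exists 0, [:: 0%N]; rewrite expr0z mul1r ev1.
- by exists 0, [:: 1%N]; rewrite expr0z mul1r ev1.
- by exists 0, [:: 2%N]; rewrite expr0z mul1r ev1.
- by exists 0, [:: 3%N]; rewrite expr0z mul1r ev1.
have [n [c'' [Hc'' Hcc']]] := eval_basis_mul Hc Hc'.
exists (k + m + n%:Z), c''; split => //.
rewrite !exprzDr ?d_unit // -mulrA (mulrA (ev c)).
rewrite (commrXz m (commr_sym (comm_d_eval c))) -(mulrA _ (ev c)) Hcc'.
by rewrite !mulrA.
Qed.

Lemma basis_shape c : c \in br_basis ->
  (exists a, ev c = wimg a) \/ exists x i y, ev c = wimg x * egen i * wimg y.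
Proof.
have /allP Hfac := basis_factorizedT.
move=> /Hfac /orP [/mapP [a _ ->] | /hasP [[c' [[x i] y]] _ /andP [/eqP <- /eqP Hnf]]].
  by left; exists a; rewrite wimg_eval.
right; exists x, i, y.
by rewrite (eval_br_nf_eq Hnf) -cat1s !eval_word_cat eval_e_letter -!wimg_eval mulrA.
Qed.

Lemma Br_lspan_basis x : inBr d r0 r1 e0 e1 x -> lspan d (map ev br_basis) x.
Proof.
have comm_basis_d : {in map ev br_basis, forall v, GRing.comm v d}.
  by move=> _ /mapP [c _ ->]; apply/commr_sym/comm_d_eval.
have basis_mul : {in map ev br_basis &, forall v v',
    exists k v'', v'' \in map ev br_basis /\ v * v' = d ^ k * v''}.
  move=> _ _ /mapP [c Hc ->] /mapP [c' Hc' ->].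
  have [n [c'' [Hc'' ->]]] := eval_basis_mul Hc Hc'.
  by exists n%:Z, (ev c''); rewrite map_f.
have gen_span y : inBrM d r0 r1 e0 e1 y -> lspan d (map ev br_basis) y.
  move=> /BrM_normal_form [k [c [Hc ->]]].
  by rewrite -[d ^ k]mul1r -[1]/(1%:~R); apply: lspan_term; rewrite map_f.
elim=> {x} [| | | | | | | y _ /lspanN // | y z _ Hy _ Hz | y z _ Hy _ Hz].
1-7: by apply: gen_span; constructor.
- exact: lspanD.
- exact: (lspanM d_unit comm_basis_d basis_mul).

Qed.
End BrauerG2.

Theorem lemma9p7 (R : unitRingType) (d r0 r1 e0 e1 : R)
    (Hrels : BrG2_rels d r0 r1 e0 e1)
    (D0 D1 : seq word)
    (HD0 : left_coset_reps false D0) (HD1 : left_coset_reps true D1) :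
  let D := fun i : bool => if i then D1 else D0 in
  let E := fun i : bool => if i then e1 else e0 in
  (forall x, inBrM d r0 r1 e0 e1 x ->
     (exists (i : bool) (k : int) (u v w : word),
        [/\ u \in D i, inK i v, rev w \in D i &
            x = d ^ k * wimg r0 r1 u * E i * wimg r0 r1 v * wimg r0 r1 w])
     \/ (exists (k : int) (a : word), x = d ^ k * wimg r0 r1 a))
  /\ (exists s : seq R, size s = 39%N /\
        forall x, inBr d r0 r1 e0 e1 x -> lspan d s x).
Proof.
move=> D E; split.
- move=> _ /(BrM_normal_form Hrels) [k [c [Hc ->]]].
  case: (basis_shape Hrels Hc) => [[a ->] | [x [i [y ->]]]].
    by right; exists k, a.
  have HD : left_coset_reps i (D i) by case: i.
  have [u [v [w [Hu Hv Hw ->]]]] := coset_normal_form Hrels HD x y.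
  by left; exists i, k, u, v, w; split; rewrite // !mulrA.
- exists (map (eval_word (br_letter d r0 r1 e0 e1)) br_basis).
  by split; [rewrite size_map | exact: Br_lspan_basis].
Qed.
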